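(* Let $I\subseteq\mathfrak{M}$ be an ideal of $P$ and let $\mathrm{GFan}(I)=\{\overline G_1,\dots,\overline G_k\}$. (a) For $i=1,\dots,k$, $\mathrm{sepdim}(P/I)\le n-\#\mathrm{LI}(\overline G_i)$. (b) For $i\in\{1,\dots,k\}$, $\mathrm{sepdim}(P/I)=n-\#\mathrm{LI}(\overline G_i)$ if and only if $\#\mathrm{LI}(\overline G_i)=\max_{1\le j\le k}\#\mathrm{LI}(\overline G_j)$. (c) For $i$ such that $\#\mathrm{LI}(\overline G_i)$ is maximal, the $\mathrm{LI}(\overline G_i)$-separating re-embedding $\Phi:P/I\to\widehat P/(I\cap\widehat P)$ (with $\widehat P=K[X\setminus\mathrm{LI}(\overline G_i)]$) is an optimal separating re-embedding.
   Context: $K$ is a field, $P=K[x_1,\dots,x_n]$, $X=\{x_1,\dots,x_n\}$, $\mathfrak{M}=\langle x_1,\dots,x_n\rangle$. For $f\in P$, $\mathrm{indets}(f)$ is the set of indeterminates dividing some term in the support of $f$. For $f\in\mathfrak{M}$ with nonzero degree-one part, $z$ an indeterminate occurring in that degree-one part, and $c\ne0$ the coefficient of $z$ in $f$, $\mathrm{tail}_z(f)=z-\frac1cf$; $f$ is $z$-separating if $z\notin\mathrm{indets}(\mathrm{tail}_z(f))$. For distinct indeterminates $Z=\{z_1,\dots,z_s\}$, a tuple $(f_1,\dots,f_s)$ of nonzero elements of $\mathfrak{M}$ is coherently $Z$-separating if each $f_i$ is $z_i$-separating and $z_i\notin\mathrm{indets}(f_j)$ for $j\neq i$. If $I$ contains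 such a tuple, the $Z$-separating re-embedding is the $K$-algebra isomorphism $\Phi:P/I\to\widehat P/(I\cap\widehat P)$, $\widehat P=K[X\setminus Z]$, induced by $x\mapsto x$ for $x\notin Z$ and $z_i\mapsto\mathrm{tail}_{z_i}(f_i)$ (it does not depend on the choice of the tuple). It is an optimal separating re-embedding if $\#Z'\le\#Z$ for every $Z'\subseteq X$ such that $I$ contains a coherently $Z'$-separating tuple; the separating embedding dimension is then $\mathrm{sepdim}(P/I)=n-\#Z$. A marked reduced Gröbner basis of $I$ is the set of pairs $\{(\mathrm{LT}_\sigma(g),g)\mid g\in G\}$ for $G$ the reduced $\sigma$-Gröbner basis of $I$ for some term ordering $\sigma$; $\mathrm{GFan}(I)$ is the set of all distinct marked reduced Gröbner bases of $I$; for $\overline G\in\mathrm{GFan}(I)$, $\mathrm{LI}(\overline G)$ is the set of indeterminates $z\in X$ that occur as a marked leading term of some element of $\overline G$. *)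

From HB Require Import structures.
From mathcomp Require Import all_boot all_order all_algebra.
From mathcomp Require Import finmap.
From mathcomp Require Import mpoly.
From mathcomp Require Import boolp.

Set Implicit Arguments.
Unset Strict Implicit.
Unset Printing Implicit Defensive.

Import GRing.Theory.
Local Open Scope ring_scope.


Section Defs.
Variables (K : fieldType) (n : nat).
Local Notation P := {mpoly K[n]}.
Local Notation mon := 'X_{1..n}.

Definition is_ideal (I : P -> Prop) : Prop :=
  [/\ I 0,
      (forall f g, I f -> I g -> I (f + g)) &
      (forall h f, I f -> I (h * f))].

(** The maximal ideal M = <x_1,...,x_n>: zero constant coefficient. *)
Definition inM (f : P) : Prop := f@_(0%MM) = 0.

Definition indets (f : P) : {set 'I_n} :=
  [set j : 'I_n | `[< exists2 m, m \in msupp f & (0 < m j)%N >]].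

Definition lincoef (z : 'I_n) (f : P) : K := f@_(U_(z)%MM).

Definition tail (z : 'I_n) (f : P) : P := 'X_z - (lincoef z f)^-1 *: f.

Definition separating (z : 'I_n) (f : P) : Prop :=
  [/\ inM f, lincoef z f != 0 & z \notin indets (tail z f)].

Definition coh_sep_tuple_in (I : P -> Prop) (Z : {set 'I_n}) (F : 'I_n -> P) :
    Prop :=
  forall z, z \in Z ->
    [/\ F z != 0, inM (F z), I (F z), separating z (F z) &
        forall z', z' \in Z -> z' != z -> z \notin indets (F z')].

Definition has_coh_sep (I : P -> Prop) (Z : {set 'I_n}) : Prop :=
  exists F : 'I_n -> P, coh_sep_tuple_in I Z F.

Definition optimal_sep (I : P -> Prop) (Z : {set 'I_n}) : Prop :=
  has_coh_sep I Z /\ (forall Z', has_coh_sep I Z' -> #|Z'| <= #|Z|)%N.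

Definition sepdim (I : P -> Prop) : nat :=
  (n - \max_(Z : {set 'I_n} | `[< has_coh_sep I Z >]) #|Z|)%N.

Definition term_ordering (sigma : rel mon) : Prop :=
  [/\ reflexive sigma, antisymmetric sigma, transitive sigma & total sigma] /\
  (forall m1 m2 m3, sigma m1 m2 -> sigma (m1 + m3)%MM (m2 + m3)%MM) /\
  (forall m, sigma 0%MM m).

Definition is_LT (sigma : rel mon) (f : P) (m : mon) : Prop :=
  m \in msupp f /\ (forall m', m' \in msupp f -> sigma m' m).

Definition reduced_GB (sigma : rel mon) (I : P -> Prop) (G : {fset P}) : Prop :=
  [/\ (forall g, g \in G -> I g /\ g != 0),
      (forall g, g \in G -> exists2 m, is_LT sigma g m & g@_m = 1),
      (forall f, I f -> f != 0 -> forall mf, is_LT sigma f mf ->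
          exists g, exists2 mg, g \in G /\ is_LT sigma g mg & (mg <= mf)%MM) &
      (forall g g', g \in G -> g' \in G -> g != g' -> forall mg',
          is_LT sigma g' mg' ->
          forall m, m \in msupp g -> ~~ (mg' <= m)%MM)].

Definition in_GFan (I : P -> Prop) (Gb : {fset (mon * P)}) : Prop :=
  exists sigma, term_ordering sigma /\
  exists G : {fset P}, reduced_GB sigma I G /\
    (forall p, p \in Gb <-> (p.2 \in G /\ is_LT sigma p.2 p.1)).

Definition LI (Gb : {fset (mon * P)}) : {set 'I_n} :=
  [set j : 'I_n | `[< exists2 p, p \in Gb & p.1 = U_(j)%MM >]].

Definition maxLI (I : P -> Prop) : nat :=
  \max_(S : {set 'I_n} | `[< exists Gb, in_GFan I Gb /\ LI Gb = S >]) #|S|.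

End Defs.

From HB Require Import structures.
From mathcomp Require Import all_boot all_order all_algebra.
From mathcomp Require Import finmap mpoly boolp.
From mathcomp Require Import zify.

(* By definition sepdim(P/I) = n - M, where M is the largest #Z such that I
   contains a coherently Z-separating tuple.  All three parts follow by
   arithmetic from the key equality M = maxLI I (lemma sepdim_maxLI):
   - (>=, LI_coherent) In a marked reduced Gröbner basis Gb, the elements
     marked by an indeterminate z form a coherently LI(Gb)-separating tuple:
     z being the leading term, no other term contains z, and by reducedness
     z occurs in no other basis element.
   - (<=, coherent_le_maxLI) Given a coherently Z-separating tuple (f_z),
     the weight ordering giving the variables of Z a large weight makes z
     the leading term of f_z, so the reduced Gröbner basis of I for this
     ordering has Z inside its LI.
   The second step needs reduced Gröbner bases to exist; this is proved
   first: Dickson's lemma gives finitely many minimal leading terms, and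
   normal forms modulo I provide one reduced element for each of them. *)

Set Implicit Arguments.
Unset Strict Implicit.
Unset Printing Implicit Defensive.
Import Order.TTheory GRing.Theory.
Local Open Scope ring_scope.

Lemma nondecreasing_subseq (v : nat -> nat) :
  exists phi : nat -> nat, (forall a, phi a < phi a.+1)%N /\
     (forall a, v (phi a) <= v (phi a.+1))%N.
Proof.
have next i : exists j, (i < j)%N /\ forall k, (i < k)%N -> (v j <= v k)%N.
  have ex_val : exists val, `[< exists j, (i < j)%N /\ v j = val >].
    by exists (v i.+1); apply/asboolP; exists i.+1.
  case: (ex_minnP ex_val) => val /asboolP [j [ij <-]] val_min.
  by exists j; split => // k ik; apply: val_min; apply/asboolP; exists k.
have [nx nxP] := choice next.
pose phi := fix phi a := if a is a'.+1 then nx (phi a') else nx 0%N.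
have phi_lt a : (phi a < phi a.+1)%N by case: (nxP (phi a)).
exists phi; split => // -[|a] /=.
  by case: (nxP 0%N) => lt0 min0; apply: min0; apply: ltn_trans lt0 (phi_lt 0%N).
by case: (nxP (phi a)) => lta mina; apply: mina; apply: ltn_trans lta (phi_lt a.+1).
Qed.

(* By induction on the number of
   coordinates, extract a subsequence nondecreasing in the first k ones. *)
Lemma dickson (n : nat) (u : nat -> 'X_{1..n}) :
  exists i j, (i < j)%N /\ (u i <= u j)%MM.
Proof.
have sub k : (k <= n)%N -> exists phi : nat -> nat,
    (forall a, phi a < phi a.+1)%N /\
    (forall a (c : 'I_n), c < k -> u (phi a) c <= u (phi a.+1) c)%N.
  elim: k => [|k IHk] kn; first by exists id.
  have [phi [phi_lt phi_le]] := IHk (ltnW kn).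
  have [psi [psi_lt psi_le]] := nondecreasing_subseq (fun a => u (phi a) (Ordinal kn)).
  exists (phi \o psi); split => a /=.
    exact: (homo_ltn (@ltn_trans) phi_lt).
  move=> c; rewrite ltnS leq_eqVlt => /orP [/eqP ck|ck].
    by have -> : c = Ordinal kn by apply: val_inj.
  apply: (homo_leq (f := fun a => u (phi a) c) (@leqnn) (@leq_trans)).
    by move=> i; apply: phi_le.
  exact: ltnW.
have [phi [phi_lt phi_le]] := sub n (leqnn n).
exists (phi 0%N), (phi 1%N); split; first exact: phi_lt.
by apply/mnm_lepP => c; apply: phi_le.
Qed.

Definition mmin (n : nat) (A : 'X_{1..n} -> Prop) (m : 'X_{1..n}) :=
  A m /\ forall m', A m' -> (m' <= m)%MM -> m' = m.

(* Any set of monomials has finitely many minimal elements: otherwise they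
   would form an infinite antichain, contradicting Dickson's lemma. *)
Lemma mmin_finite (n : nat) (A : 'X_{1..n} -> Prop) :
  exists s : seq 'X_{1..n}, forall m, mmin A m <-> m \in s.
Proof.
suff [s sP] : exists s : seq 'X_{1..n}, forall m, mmin A m -> m \in s.
  exists [seq m <- s | `[< mmin A m >]] => m; rewrite mem_filter.
  split; first by move=> Am; rewrite sP // andbT; apply/asboolP.
  by case/andP => /asboolP.
apply: contrapT => no_seq.
have fresh (s : seq 'X_{1..n}) : exists m, mmin A m /\ m \notin s.
  apply: contrapT => none; apply: no_seq; exists s => m Am.
  by apply: contrapT => /negP ms; apply: none; exists m.
have [pk pkP] := choice fresh.
pose S := fix S k := if k is k'.+1 then pk (S k') :: S k' else [::].
pose u k := pk (S k).
have u_in i j : (i < j)%N -> u i \in S j.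
  elim: j => // j IHj; rewrite ltnS leq_eqVlt => /orP [/eqP ->|ij] /=.
    by rewrite inE eqxx.
  by rewrite inE IHj ?orbT.
have [i [j [ij uij]]] := dickson u.
have [[_ min_uj] uj_new] := pkP (S j).
have [[Aui _] _] := pkP (S i).
by move: (u_in i j ij); rewrite /u (min_uj _ Aui uij) (negbTE uj_new).
Qed.

Lemma mmin_below (n : nat) (A : 'X_{1..n} -> Prop) m :
  A m -> exists m0, mmin A m0 /\ (m0 <= m)%MM.
Proof.
elim: {m}(mdeg m) {-2}m (leqnn (mdeg m)) => [|k IHk] m deg_m Am.
  exists m; split; last exact: lepm_refl.
  move: deg_m Am; rewrite leqn0 mdeg_eq0 => /eqP -> A0.
  split => // m' _ /mnm_lepP le0; apply/mnmP => i.
  by apply/eqP; rewrite mnm0E -leqn0; move: (le0 i); rewrite mnm0E.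
have [min_m|not_min] := pselect (mmin A m).
  by exists m; split => //; exact: lepm_refl.
have [m' [Am' [le_m' ne_m']]] : exists m', A m' /\ (m' <= m)%MM /\ m' <> m.
  apply: contrapT => none; apply: not_min; split => // m' Am' le_m'.
  by apply: contrapT => ne; apply: none; exists m'.
have deg_lt : (mdeg m' < mdeg m)%N.
  rewrite -(submK le_m') mdegD -[X in (X < _)%N]add0n ltn_add2r lt0n mdeg_eq0.
  by apply: contra_notN ne_m' => /eqP d0; rewrite -(submK le_m') d0 add0m.
have [m0 [min_m0 le_m0]] := IHk m' (leq_trans deg_lt deg_m) Am'.
by exists m0; split => //; apply: lepm_trans le_m0 le_m'.
Qed.

Lemma var_divides (n : nat) (z : 'I_n) (m : 'X_{1..n}) :
  (0 < m z)%N -> (U_(z) <= m)%MM.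
Proof. by move=> mz; apply/mnm_lepP => i; rewrite mnm1E; case: eqP => // <-. Qed.

Section IdealFacts.
Variables (K : fieldType) (n : nat) (I : {mpoly K[n]} -> Prop).
Hypothesis HI : is_ideal I.

Lemma ideal0 : I 0. Proof. by case: HI. Qed.

Lemma idealD f g : I f -> I g -> I (f + g).
Proof. by case: HI => _ closedD _; apply: closedD. Qed.

Lemma idealM h f : I f -> I (h * f).
Proof. by case: HI => _ _ closedM; apply: closedM. Qed.

Lemma idealZ c f : I f -> I (c *: f).
Proof. by rewrite -mul_mpolyC; apply: idealM. Qed.

Lemma idealB f g : I f -> I g -> I (f - g).
Proof. by move=> If Ig; apply: idealD => //; rewrite -scaleN1r; apply: idealZ. Qed.

End IdealFacts.

Section TermOrdering.
Variables (n : nat) (sigma : rel 'X_{1..n}).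
Hypothesis Hs : term_ordering sigma.

Lemma s_refl : reflexive sigma. Proof. by case: Hs => [[]]. Qed.
Lemma s_anti : antisymmetric sigma. Proof. by case: Hs => [[]]. Qed.
Lemma s_trans : transitive sigma. Proof. by case: Hs => [[]]. Qed.
Lemma s_total : total sigma. Proof. by case: Hs => [[]]. Qed.

Lemma s_divides m1 m2 : (m1 <= m2)%MM -> sigma m1 m2.
Proof.
move=> /submK <-; rewrite -{1}[m1]add0m.
by case: Hs => _ [compat min0]; apply: compat; apply: min0.
Qed.

Lemma seq_max (s : seq 'X_{1..n}) :
  s != [::] -> exists2 m, m \in s & forall m', m' \in s -> sigma m' m.
Proof.
elim: s => // a s IHs _; have [->|s_nil] := eqVneq s [::].
  by exists a; rewrite ?inE // => m'; rewrite inE => /eqP ->; apply: s_refl.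
have [m ms m_max] := IHs s_nil.
case/orP: (s_total a m) => [am|ma].
  exists m; first by rewrite inE ms orbT.
  by move=> m'; rewrite inE => /orP [/eqP ->|/m_max].
exists a; first by rewrite inE eqxx.
move=> m'; rewrite inE => /orP [/eqP ->|/m_max m'm]; first exact: s_refl.
exact: s_trans m'm ma.
Qed.

End TermOrdering.

Section LeadingTerms.
Variables (K : fieldType) (n : nat) (sigma : rel 'X_{1..n}).
Hypothesis Hs : term_ordering sigma.
Local Notation P := {mpoly K[n]}.

Lemma is_LTP (f : P) m : is_LT sigma f m <->
  f@_m != 0 /\ forall m', f@_m' != 0 -> sigma m' m.
Proof.
rewrite /is_LT mcoeff_msupp; split=> -[fm f_le]; split=> // m';
  by move: (f_le m'); rewrite mcoeff_msupp.
Qed.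

Lemma LT_uniq (f : P) m1 m2 : is_LT sigma f m1 -> is_LT sigma f m2 -> m1 = m2.
Proof. by move=> [f1 le1] [f2 le2]; apply: (s_anti Hs); rewrite le2 // le1. Qed.

Lemma LT_ex (f : P) : f != 0 -> exists m, is_LT sigma f m.
Proof. by rewrite -msupp_eq0 => /(seq_max Hs) [m ms m_max]; exists m. Qed.

(* If the leading term of f is the indeterminate z, then z occurs in no
   other term of f, since any multiple of z is sigma-larger than z. *)
Lemma LT_var_other (f : P) z m :
  is_LT sigma f U_(z)%MM -> f@_m != 0 -> m != U_(z)%MM -> m z = 0%N.
Proof.
move=> /is_LTP [_ f_le] fm ne_m; apply/eqP; rewrite -leqn0 leqNgt.
apply: contra ne_m => mz; apply/eqP; apply: (s_anti Hs).
by rewrite f_le //=; apply/(s_divides Hs)/var_divides.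
Qed.

End LeadingTerms.

Section ReducedGroebnerBasis.
Variables (K : fieldType) (n : nat) (I : {mpoly K[n]} -> Prop)
  (sigma : rel 'X_{1..n}).
Hypotheses (HI : is_ideal I) (HIM : forall f, I f -> inM f)
  (Hs : term_ordering sigma)
  (Hwf : well_founded (fun a b => (a != b) && sigma a b)).
Local Notation P := {mpoly K[n]}.
Local Notation mon := 'X_{1..n}.

Definition in_LT m := exists f : P, [/\ I f, f != 0 & is_LT sigma f m].

Definition supp_le b (f : P) := forall m, f@_m != 0 -> sigma m b.
Definition supp_lt b (f : P) := forall m, f@_m != 0 -> sigma m b /\ m != b.

Definition normal (f : P) := forall m, f@_m != 0 -> ~ in_LT m.

Definition reduced_at (g : P) m :=
  [/\ I g, g@_m = 1 &
      forall m', m' != m -> g@_m' != 0 -> ~ in_LT m' /\ sigma m' m].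

Lemma in_LT_monic m : in_LT m -> exists h : P, [/\ I h, h@_m = 1 & supp_le m h].
Proof.
move=> [f [If _ /is_LTP [fm f_le]]]; exists ((f@_m)^-1 *: f); split.
- exact: idealZ.
- by rewrite mcoeffZ mulVf.
- by move=> m'; rewrite mcoeffZ mulf_eq0 negb_or => /andP [_ /f_le].
Qed.

Lemma in_LT_mul m a : in_LT m -> in_LT (m + a)%MM.
Proof.
move=> [f [If _ /is_LTP [fm f_le]]]; exists (f * 'X_[a]); split.
- by rewrite mulrC; apply: idealM.
- by apply: contra_neq fm => fX0; rewrite -(mcoeffMX f a) fX0 mcoeff0.
apply/is_LTP; split; first by rewrite addmC mcoeffMX.
move=> m'; rewrite -mcoeff_msupp (perm_mem (msuppMX f a)) => /mapP [k].
rewrite mcoeff_msupp => /f_le k_le ->; rewrite ![(a + _)%MM]addmC.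
by case: Hs => _ [compat _]; apply: compat.
Qed.

(* Since I lies in the maximal ideal, the constant term is not a leading
   term, so an indeterminate in LT_sigma(I) is a minimal element of it. *)
Lemma in_LT_var_min z : in_LT U_(z)%MM -> mmin in_LT U_(z)%MM.
Proof.
move=> LTz; split=> // m LTm /submK le_m.
have [f [If _ /is_LTP [fm _]]] := LTm.
have m_ne0 : m != 0%MM by apply: contra_neq fm => ->; exact: HIM.
have : mdeg (U_(z) - m)%MM == 0%N.
  have : (mdeg m + mdeg (U_(z) - m) = 1)%N by rewrite addnC -mdegD le_m mdeg1.
  by move: m_ne0; rewrite -mdeg_eq0; lia.
by rewrite mdeg_eq0 => /eqP d0; rewrite -le_m d0 add0m.
Qed.

(* One reduction step: subtract from f its sigma-largest possible term b,
   either by a multiple of an element of I with leading term b, or, when b is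
   not in LT_sigma(I), by setting the monomial c * b aside. *)
Lemma peel_top b (f : P) : supp_le b f -> exists i0 (c : K),
  [/\ I i0, c = 0 \/ ~ in_LT b & supp_lt b (f - i0 - c *: 'X_[b])].
Proof.
move=> f_le; have [LTb|not_LTb] := pselect (in_LT b).
  have [h [Ih hb h_le]] := in_LT_monic LTb.
  exists (f@_b *: h), 0; split; [exact: idealZ | by left |].
  move=> m; rewrite scale0r subr0 mcoeffB mcoeffZ.
  have [->|nmb] := eqVneq m b; first by rewrite hb mulr1 subrr => /eqP.
  move=> nz; split => //; have [fm0|fm] := eqVneq f@_m 0; last exact: f_le.
  by move: nz; rewrite fm0 sub0r oppr_eq0 mulf_eq0 negb_or => /andP [_ /h_le].
exists 0, f@_b; split; [exact: ideal0 | by right |].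
move=> m; rewrite subr0 mcoeffB mcoeffZ mcoeffX.
have [->|nmb] := eqVneq m b; first by rewrite mulr1 subrr => /eqP.
by rewrite mulr0 subr0 => /f_le.
Qed.

Lemma normal_form b (f : P) : supp_le b f ->
  exists i, [/\ I i, normal (f - i) & supp_le b (f - i)].
Proof.
elim/(well_founded_induction Hwf): b f => b IHb f f_le.
have below_b g : supp_lt b g ->
    exists i, [/\ I i, normal (g - i) & supp_lt b (g - i)].
  move=> g_lt; have [->|nz] := eqVneq g 0.
    by exists 0; split; [exact: ideal0 | move=> m | move=> m];
      rewrite subr0 mcoeff0 eqxx.
  have [b' /is_LTP [gb' g_le]] := LT_ex Hs nz.
  have [lt_b' ne_b'] := g_lt _ gb'.
  have [i [Ii norm_i le_i]] := IHb b' (introT andP (conj ne_b' lt_b')) g g_le.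
  exists i; split => // m /le_i le_mb'; split; first exact: s_trans le_mb' lt_b'.
  by apply: contra_neq ne_b' => mb; apply: (s_anti Hs); rewrite lt_b' -mb.
have [i0 [c [Ii0 c_ok rest_lt]]] := peel_top f_le.
have [i1 [Ii1 norm1 lt1]] := below_b _ rest_lt.
exists (i0 + i1).
have -> : f - (i0 + i1) = (f - i0 - c *: 'X_[b] - i1) + c *: 'X_[b].
  by rewrite addrAC subrK opprD addrA.
set rest := _ - i1.
suff coef_ok m : (rest + c *: 'X_[b])@_m != 0 -> ~ in_LT m /\ sigma m b.
  by split=> [|m /coef_ok []|m /coef_ok []]; first exact: idealD.
rewrite mcoeffD mcoeffZ mcoeffX; have [<-|nbm] := eqVneq b m.
  have -> : rest@_b = 0 by apply/eqP; apply: contraT => /lt1 [_]; rewrite eqxx.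
  rewrite add0r mulr1 => cnz; split; last exact: s_refl.
  by case: c_ok cnz => [->|//]; rewrite eqxx.
by rewrite mulr0 addr0 => rm; split; [apply: norm1 | case: (lt1 _ rm)].
Qed.

Lemma reduced_element m : in_LT m -> exists g, reduced_at g m.
Proof.
move=> LTm; have [h [Ih hm h_le]] := in_LT_monic LTm.
have tail_le : supp_le m (h - 'X_[m]).
  move=> m'; rewrite mcoeffB mcoeffX; have [->|nm] := eqVneq m' m.
    by rewrite hm subrr => /eqP.
  by rewrite subr0; apply: h_le.
have [i [Ii norm_i le_i]] := normal_form tail_le.
have tail_m : (h - 'X_[m] - i)@_m = 0.
  by apply/eqP; apply: contraT => /norm_i /(_ LTm) [].
have split_g : h - i = 'X_[m] + (h - 'X_[m] - i).
  by rewrite [RHS]addrC addrAC subrK.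
exists (h - i); split; first exact: idealB.
  by rewrite split_g mcoeffD mcoeffX eqxx tail_m addr0.
move=> m' nm'; rewrite split_g mcoeffD mcoeffX (eq_sym m m') (negbTE nm') add0r.
by move=> nz; split; [apply: norm_i | apply: le_i].
Qed.

(* The reduced Gröbner basis: given a reduced element gs m for every m in
   LT_sigma(I) and the finite list s of minimal elements of LT_sigma(I),
   the family (gs m)_(m in s) is the reduced sigma-Gröbner basis of I. *)
Section Construction.
Variables (gs : mon -> P) (s : seq mon).
Hypothesis gsP : forall m, in_LT m -> reduced_at (gs m) m.
Hypothesis sP : forall m, mmin in_LT m <-> m \in s.

Definition rgb_basis : {fset P} := seq_fset tt (map gs s).
Definition rgb_marked : {fset mon * P} := seq_fset tt [seq (m, gs m) | m <- s].

Lemma s_in_LT m : m \in s -> in_LT m. Proof. by move/sP => []. Qed.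

Lemma gs_LT m : in_LT m -> is_LT sigma (gs m) m.
Proof.
move=> LTm; have [_ g1 g_other] := gsP LTm; apply/is_LTP.
rewrite g1 oner_eq0; split => // m'; have [->|nm] := eqVneq m' m.
  by rewrite s_refl.
by move/(g_other _ nm) => [].
Qed.

Lemma rgb_interreduced m1 m2 m : m1 \in s -> m2 \in s -> gs m1 != gs m2 ->
  (gs m1)@_m != 0 -> ~~ (m2 <= m)%MM.
Proof.
move=> m1s m2s ne_g g1m; apply/negP => le_m.
have [em|nm] := eqVneq m m1.
  have [_ m1_min] := (sP m1).2 m1s.
  have m21 : m2 = m1 by apply: m1_min (s_in_LT m2s) _; rewrite -em.
  by rewrite m21 eqxx in ne_g.
have [_ _ g_other] := gsP (s_in_LT m1s); have [not_LTm _] := g_other m nm g1m.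
by apply: not_LTm; rewrite -(submK le_m) addmC; apply/in_LT_mul/s_in_LT.
Qed.

Lemma rgb_reduced : reduced_GB sigma I rgb_basis.
Proof.
split => [g|g|f If nz mf f_LT|g g'].
- rewrite seq_fsetE => /mapP [m /s_in_LT LTm ->].
  have [Ig g1 _] := gsP LTm; split => //.
  by apply: contra_eq_neq g1 => ->; rewrite mcoeff0 eq_sym oner_neq0.
- rewrite seq_fsetE => /mapP [m /s_in_LT LTm ->].
  by exists m; [exact: gs_LT | case: (gsP LTm)].
- have LTmf : in_LT mf by exists f.
  have [m0 [/sP m0s le_m0]] := mmin_below LTmf.
  exists (gs m0), m0 => //; split; last exact/gs_LT/s_in_LT.
  by rewrite seq_fsetE map_f.
rewrite !seq_fsetE => /mapP [m1 m1s ->] /mapP [m2 m2s ->] ne_g mg' LT2 m.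
rewrite mcoeff_msupp (LT_uniq Hs LT2 (gs_LT (s_in_LT m2s))).
exact: rgb_interreduced.
Qed.

Lemma rgb_marked_GFan : in_GFan I rgb_marked.
Proof.
exists sigma; split => //; exists rgb_basis; split; first exact: rgb_reduced.
move=> [m g]; rewrite seq_fsetE seq_fsetE /=; split.
  by case/mapP => m' m's [-> ->]; rewrite map_f //; split=> //; exact/gs_LT/s_in_LT.
case=> /mapP [m' m's ->] LTm.
by rewrite -(LT_uniq Hs (gs_LT (s_in_LT m's)) LTm) (map_f (fun m => (m, gs m))).
Qed.

(* An indeterminate in LT_sigma(I) is minimal there, hence marked. *)
Lemma LI_rgb z : in_LT U_(z)%MM -> z \in LI rgb_marked.
Proof.
move=> /in_LT_var_min /sP zs; rewrite inE; apply/asboolP.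
by exists (U_(z)%MM, gs U_(z)%MM); rewrite // seq_fsetE (map_f (fun m => (m, gs m))).
Qed.

End Construction.

Lemma reduced_GB_exists : exists Gb, in_GFan I Gb /\
  forall z, in_LT U_(z)%MM -> z \in LI Gb.
Proof.
have [s sP] := mmin_finite in_LT.
have choose_red m : exists g, in_LT m -> reduced_at g m.
  have [/reduced_element [g gP]|not_LT] := pselect (in_LT m); first by exists g => _.
  by exists 0 => /not_LT.
have [gs gsP] := choice choose_red.
exists (rgb_marked gs s); split; first exact: rgb_marked_GFan.
exact: LI_rgb.
Qed.

End ReducedGroebnerBasis.

Section Separation.
Variables (K : fieldType) (n : nat).
Local Notation P := {mpoly K[n]}.
Local Notation mon := 'X_{1..n}.

Lemma notin_indetsP (f : P) z :
  reflect (forall m, f@_m != 0 -> m z = 0%N) (z \notin indets f).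
Proof.
rewrite inE; apply: (iffP negP) => [z_notin m fm | z_free].
  apply/eqP; rewrite -leqn0 leqNgt; apply/negP => mz; apply: z_notin.
  by apply/asboolP; exists m; rewrite ?mcoeff_msupp.
by move/asboolP => [m]; rewrite mcoeff_msupp => /z_free ->.
Qed.

(* A monic element of M with leading term z is z-separating: z occurs in
   none of its other terms. *)
Lemma LT_var_separating sigma (Hs : term_ordering sigma) (g : P) z :
  inM g -> is_LT sigma g U_(z)%MM -> g@_U_(z) = 1 -> separating z g.
Proof.
move=> g0 LTg g1; split=> //; first by rewrite /lincoef g1 oner_neq0.
apply/notin_indetsP => m; rewrite /tail /lincoef g1 invr1 scale1r mcoeffB mcoeffX.
have [<-|nm] := eqVneq U_(z)%MM m; first by rewrite g1 subrr => /eqP.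
by rewrite sub0r oppr_eq0 => gm; apply: (LT_var_other Hs LTg gm); rewrite eq_sym.
Qed.

Lemma reduced_GB_var_free sigma (I : P -> Prop) G (g g' : P) z :
  reduced_GB sigma I G -> g \in G -> g' \in G -> g != g' ->
  is_LT sigma g' U_(z)%MM -> z \notin indets g.
Proof.
case=> _ _ _ interreduced Gg Gg' ne LTg'; apply/notin_indetsP => m gm.
move: (interreduced _ _ Gg Gg' ne _ LTg' m); rewrite mcoeff_msupp => /(_ gm).
by apply: contraNeq; rewrite -lt0n; apply: var_divides.
Qed.

Lemma LI_coherent (I : P -> Prop) (HIM : forall f, I f -> inM f) Gb :
  in_GFan I Gb -> has_coh_sep I (LI Gb).
Proof.
move=> [sigma [Hs [G [GB markedP]]]].
have pick z : exists g : P, z \in LI Gb -> (U_(z)%MM, g) \in Gb.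
  have [|_] := boolP (z \in LI Gb); last by exists 0.
  by rewrite inE => /asboolP [[m g] pG /= mz]; exists g; rewrite -mz.
have [F FP] := choice pick.
have F_marked z : z \in LI Gb -> F z \in G /\ is_LT sigma (F z) U_(z)%MM.
  by move/FP/markedP.
exists F => z zL; have [FG LTz] := F_marked z zL.
have [GB_nz GB_monic _ _] := GB; have [IF nzF] := GB_nz _ FG.
have F1 : (F z)@_U_(z) = 1.
  by have [m LTm Fm] := GB_monic _ FG; rewrite -(LT_uniq Hs LTm LTz).
split => //; [exact: HIM | exact: LT_var_separating (HIM _ IF) LTz F1 |].
move=> z' z'L ne; have [FG' LTz'] := F_marked z' z'L.
apply: (reduced_GB_var_free GB FG' FG _ LTz); apply: contra_neq ne => FF.
have LTz'z : is_LT sigma (F z') U_(z)%MM by rewrite FF.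
by apply/eqP; rewrite -eq_mnm1 (LT_uniq Hs LTz' LTz'z).
Qed.

Lemma coherent_support (I : P -> Prop) Z F z m :
  coh_sep_tuple_in I Z F -> z \in Z -> (F z)@_m != 0 -> m != U_(z)%MM ->
  forall i, i \in Z -> m i = 0%N.
Proof.
move=> FP zZ Fm nm i iZ; have [_ _ _ [_ lc z_free] _] := FP z zZ.
have [->|niz] := eqVneq i z.
  move/notin_indetsP: z_free; apply.
  rewrite /tail mcoeffB mcoeffZ mcoeffX (eq_sym U_(z)%MM) (negbTE nm) sub0r oppr_eq0.
  by rewrite mulf_neq0 ?invr_eq0.
have [_ _ _ _ i_free] := FP i iZ; have zi : z != i by rewrite eq_sym.
by move/notin_indetsP: (i_free z zZ zi); apply.
Qed.

End Separation.

Section WeightOrdering.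
Variables (n N : nat) (Z : {set 'I_n}).
Local Notation mon := 'X_{1..n}.

Definition zweight (m : mon) : nat := (N * (\sum_(i in Z) m i) + mdeg m)%N.

Definition zorder : rel mon := fun m1 m2 =>
  (zweight m1 < zweight m2)%N || ((zweight m1 == zweight m2) && (m1 <= m2)%O).

(* The weight is additive, so zorder is a term ordering. *)
Lemma zweightD m1 m2 : zweight (m1 + m2)%MM = (zweight m1 + zweight m2)%N.
Proof.
have sumD : (\sum_(i in Z) (m1 + m2)%MM i =
              \sum_(i in Z) m1 i + \sum_(i in Z) m2 i)%N.
  by rewrite -big_split; apply: eq_bigr => i _; rewrite mnmDE.
by rewrite /zweight mdegD sumD mulnDr addnACA.
Qed.

Lemma zorder_term : term_ordering zorder.
Proof.
split; [split|split].
- by move=> m; rewrite /zorder eqxx lexx orbT.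
- move=> m1 m2 /andP []; rewrite /zorder.
  case: (ltngtP (zweight m1) (zweight m2)) => //= _ le12 le21.
  by apply: le_anti; rewrite le12 le21.
- move=> m2 m1 m3; rewrite /zorder.
  case: (ltngtP (zweight m1) (zweight m2)) => w12 //= le12;
  case: (ltngtP (zweight m2) (zweight m3)) => w23 //= le23.
  + by rewrite (ltn_trans w12 w23).
  + by rewrite -w23 w12.
  + by rewrite w12 w23.
  + by rewrite w12 w23 ltnn eqxx (le_trans le12 le23) orbT.
- move=> m1 m2; rewrite /zorder.
  by case: (ltngtP (zweight m1) (zweight m2)) => //= _; exact: le_total.
- by move=> m1 m2 m3; rewrite /zorder !zweightD ltn_add2r eqn_add2r lemc_add2l.
- move=> m; rewrite /zorder; have -> : zweight 0%MM = 0%N.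
    by rewrite /zweight mdeg0 big1 ?muln0 // => i _; rewrite mnm0E.
  have [->|//] := posnP (zweight m).
  by have := lemc_addr 0%MM m; rewrite add0m => ->.
Qed.

(* Well-foundedness: by induction on the weight, then on the library's
   well-founded monomial order. *)
Lemma zorder_wf : well_founded (fun a b => (a != b) && zorder a b).
Proof.
set R := fun a b => _.
suff acc k m : (zweight m <= k)%N -> Acc R m by move=> m; apply: (acc _ m (leqnn _)).
elim: k m => [|k IHk] m; elim/(well_founded_induction (@ltom_wf n)): m => m IHm w_m;
  constructor => m' /andP [ne /orP [w_lt|/andP [/eqP w_eq le]]].
- by move: (leq_trans w_lt w_m).
- by apply: IHm; [rewrite lt_def eq_sym ne le | rewrite w_eq].
- by apply: IHk; rewrite -ltnS (leq_trans w_lt w_m).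
- by apply: IHm; [rewrite lt_def eq_sym ne le | rewrite w_eq].
Qed.

Lemma zorder_below_var (m : mon) z : z \in Z ->
  (forall i, i \in Z -> m i = 0%N) -> (mdeg m <= N)%N -> zorder m U_(z)%MM.
Proof.
move=> zZ m_free deg_m; apply/orP; left.
rewrite /zweight big1 ?muln0 // mdeg1 (bigD1 z) //= mnm1E eqxx big1 ?addn0.
  by rewrite muln1 addn1 ltnS.
by move=> i /andP [_ niz]; rewrite mnm1E eq_sym (negbTE niz).
Qed.

End WeightOrdering.

Section MaxLI.
Variables (K : fieldType) (n : nat) (I : {mpoly K[n]} -> Prop).
Hypotheses (HI : is_ideal I) (HIM : forall f, I f -> inM f).

Lemma coherent_LT Z F N z : coh_sep_tuple_in I Z F ->
  (forall z', z' \in Z -> msize (F z') <= N)%N ->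
  z \in Z -> is_LT (zorder N Z) (F z) U_(z)%MM.
Proof.
move=> FP F_le zZ; have [_ _ _ [_ lc _] _] := FP z zZ.
apply/is_LTP; split=> // m Fm; have [->|nm] := eqVneq m U_(z)%MM.
  exact: (s_refl (zorder_term _ _)).
apply: zorder_below_var (coherent_support FP zZ Fm nm) _ => //.
apply/ltnW/(leq_trans _ (F_le z zZ)).
by apply: msize_mdeg_lt; rewrite mcoeff_msupp.
Qed.

Lemma coherent_le_maxLI Z : has_coh_sep I Z -> (#|Z| <= maxLI I)%N.
Proof.
move=> [F FP]; pose N := (\sum_(z in Z) msize (F z))%N.
have [Gb [GbP LI_sub]] := reduced_GB_exists HI HIM (zorder_term N Z) (zorder_wf N Z).
have Z_sub : Z \subset LI Gb.
  apply/subsetP => z zZ; apply: LI_sub; have [nzF _ IF _ _] := FP z zZ.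
  exists (F z); split => //; apply: coherent_LT FP _ zZ => z' z'Z.
  by rewrite /N (bigD1 z') //= leq_addr.
apply: leq_trans (subset_leq_card Z_sub) _.
by apply: (leq_bigmax_cond (F := fun S : {set 'I_n} => #|S|)); apply/asboolP; exists Gb.
Qed.

Lemma LI_le_maxLI Gb : in_GFan I Gb -> (#|LI Gb| <= maxLI I)%N.
Proof.
move=> GbP; apply: (leq_bigmax_cond (F := fun S : {set 'I_n} => #|S|)).
by apply/asboolP; exists Gb.
Qed.

Lemma maxLI_le_n : (maxLI I <= n)%N.
Proof. by apply/bigmax_leqP => S _; have := max_card S; rewrite card_ord. Qed.

Lemma sepdim_maxLI : sepdim I = (n - maxLI I)%N.
Proof.
congr (n - _)%N; apply/eqP; rewrite eqn_leq; apply/andP; split.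
  by apply/bigmax_leqP => Z /asboolP; apply: coherent_le_maxLI.
apply/bigmax_leqP => S /asboolP [Gb [GbP <-]].
apply: (leq_bigmax_cond (F := fun S : {set 'I_n} => #|S|)).
by apply/asboolP; apply: LI_coherent GbP.
Qed.

End MaxLI.

Theorem proposition3p6 (K : fieldType) (n : nat) (I : {mpoly K[n]} -> Prop)
    (HI : is_ideal I) (HIM : forall f, I f -> inM f) :
  (forall Gb, in_GFan I Gb -> (sepdim I <= n - #|LI Gb|)%N) /\
  (forall Gb, in_GFan I Gb ->
     (sepdim I = (n - #|LI Gb|)%N <-> #|LI Gb| = maxLI I)) /\
  (forall Gb, in_GFan I Gb -> #|LI Gb| = maxLI I -> optimal_sep I (LI Gb)).
Proof.
have max_le : (maxLI I <= n)%N by apply: maxLI_le_n.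
rewrite (sepdim_maxLI HI HIM); split; last split.
- by move=> Gb /LI_le_maxLI LI_Gb; rewrite leq_sub2l.
- by move=> Gb /LI_le_maxLI LI_Gb; split => [|->] //; lia.
- move=> Gb GbP LI_max; split; first exact: LI_coherent GbP.
  by move=> Z' /(coherent_le_maxLI HI HIM); rewrite LI_max.
Qed.
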